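(* Let $G$ be a graph, $(\Gamma,\chi)$ a geometric $\ell$-layer drawing of $G$ in general position, $S$ a vertex cover of $G$, and $v\in V(G)\setminus S$. Then there exists a point $p\in C_{\Gamma,S}(v)$ such that cloning $v$ into a new vertex $w$ placed at $p$ yields a geometric $\ell$-layer drawing (in general position) of the resulting graph if and only if $A_{\Gamma,\chi}(v)\neq\emptyset$.
   Context: A straight-line drawing maps vertices to distinct points of $\mathbb{R}^2$, edges being straight segments; a geometric $\ell$-layer drawing $(\Gamma,\chi)$ of $G$ is a straight-line drawing $\Gamma$ with an edge coloring $\chi:E(G)\to[\ell]$ such that no two same-colored edges cross. General position: no three vertices collinear and no three edges crossing at a common point. Cloning $v$ into $w$ placed at $p$ means: add a new vertex $w$ with $N(w)=N_G(v)$, set $\Gamma(w)=p$, and color each edge $wu$ ($u\in N_G(v)$) with $\chi(vu)$. For distinct vertices $v,a,b$: $H_\Gamma(v,a,b)$ is the open half-plane bounded by the line through $\Gamma(a),\Gamma(b)$ not containing $\Gamma(v)$; $T_\Gamma(v,a,b)$ is the interior of the ''tie'' (double wedge) with center $\Gamma(v)$ and directions $\Gamma(a)-\Gamma(v)$ and $\Gamma(b)-\Gamma(v)$, i.e. the set $\{\Gamma(v)+\lambda(\alpha(\Gamma(a)-\Gamma(v))+\beta(\Gamma(b)-\Gamma(v))): \alpha,\beta>0,\lambda\neq 0\}$. The cell of $v$ is $C_{\Gamma,S}(v)=\mathbb{R}^2\setminus\bigcup_{a,b\in S,a\neq b}H_\Gamma(v,a,b)$. The admissible region is $A_{\Gamma,\chi}(v)=\bigcap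 T_\Gamma(v,a,b)$, the intersection over all distinct $a,b\in N_G(v)$ with $\chi(va)=\chi(vb)$ (the empty intersection being $\mathbb{R}^2$). *)

From mathcomp Require Import all_boot all_order all_algebra.
From mathcomp Require Import reals.
Set Implicit Arguments. Unset Strict Implicit. Unset Printing Implicit Defensive.
Import Order.TTheory GRing.Theory Num.Theory.
Local Open Scope ring_scope.

Section Geometry.
Variable R : realType.
Notation pt := (R * R)%type.

Definition orient (p q r : pt) : R :=
  (q.1 - p.1) * (r.2 - p.2) - (q.2 - p.2) * (r.1 - p.1).

Definition on_open_seg (x p q : pt) : Prop :=
  exists t : R, 0 < t < 1 /\ x = (p.1 + t * (q.1 - p.1), p.2 + t * (q.2 - p.2)).

Variable V : finType.

Definition same_edge (a b c d : V) : Prop :=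
  (a = c /\ b = d) \/ (a = d /\ b = c).

Definition edges_cross (G : V -> pt) (a b c d : V) : Prop :=
  ~ same_edge a b c d /\
  exists x, on_open_seg x (G a) (G b) /\ on_open_seg x (G c) (G d).

(* geometric l-layer drawing: straight-line drawing (distinct points),
   chi an edge colouring E(G) -> [l] (given as a symmetric function on
   adjacent pairs, values in {0,...,l-1}), no two same-coloured edges cross *)
Definition layer_drawing (e : rel V) (l : nat) (G : V -> pt)
    (chi : V -> V -> nat) : Prop :=
  injective G /\
  (forall a b, e a b -> (chi a b < l)%N) /\
  (forall a b, e a b -> chi a b = chi b a) /\
  (forall a b c d, e a b -> e c d -> chi a b = chi c d ->
     ~ edges_cross G a b c d).

Definition general_position (e : rel V) (G : V -> pt) : Prop :=
  (forall a b c : V, a <> b -> b <> c -> a <> c -> orient (G a) (G b) (G c) != 0) /\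
  (forall a1 b1 a2 b2 a3 b3 (x : pt), e a1 b1 -> e a2 b2 -> e a3 b3 ->
     ~ same_edge a1 b1 a2 b2 -> ~ same_edge a1 b1 a3 b3 -> ~ same_edge a2 b2 a3 b3 ->
     on_open_seg x (G a1) (G b1) -> on_open_seg x (G a2) (G b2) ->
     on_open_seg x (G a3) (G b3) -> False).

Definition vertex_cover (e : rel V) (S : {set V}) : Prop :=
  forall a b, e a b -> a \in S \/ b \in S.

(* cloning v into a new vertex w = None *)
Definition clone_rel (e : rel V) (v : V) : rel (option V) :=
  fun x y => match x, y with
             | Some a, Some b => e a b
             | None, Some b => e v b
             | Some a, None => e v a
             | None, None => false
             end.

Definition clone_draw (G : V -> pt) (p : pt) : option V -> pt :=
  fun x => match x with Some a => G a | None => p end.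

Definition clone_col (chi : V -> V -> nat) (v : V) : option V -> option V -> nat :=
  fun x y => match x, y with
             | Some a, Some b => chi a b
             | None, Some b => chi v b
             | Some a, None => chi v a
             | None, None => 0%N
             end.

Definition halfplane (G : V -> pt) (v a b : V) (q : pt) : Prop :=
  orient (G a) (G b) q * orient (G a) (G b) (G v) < 0.

Definition tie (G : V -> pt) (v a b : V) (q : pt) : Prop :=
  exists lam al be : R, lam != 0 /\ 0 < al /\ 0 < be /\
    q = ((G v).1 + lam * (al * ((G a).1 - (G v).1) + be * ((G b).1 - (G v).1)),
         (G v).2 + lam * (al * ((G a).2 - (G v).2) + be * ((G b).2 - (G v).2))).

Definition cell (G : V -> pt) (S : {set V}) (v : V) (q : pt) : Prop :=
  forall a b, a \in S -> b \in S -> a <> b -> ~ halfplane G v a b q.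

Definition admissible (e : rel V) (G : V -> pt) (chi : V -> V -> nat) (v : V)
    (q : pt) : Prop :=
  forall a b, a <> b -> e v a -> e v b -> chi v a = chi v b -> tie G v a b q.

End Geometry.

(* If a and b are same-coloured neighbours of v, both lie in the vertex cover S, so a
   point p of the cell lies on v's side of the line ab; were p outside the tie at v
   spanned by a and b, one of the new edges pa, pb would cross the old edge vb or va,
   which has the same colour.  Conversely, given an admissible q <> v, put the clone at
   p(s) = v + s (q - v) + s^2 (q - v)^perp for small s > 0.  Orientations involving p(s)
   that are nonzero at v keep their sign, so p(s) stays in the cell and (ties being
   invariant under scaling about v) in the admissible region, and each new edge wu
   inherits from vu its non-crossings with the edges of its colour; the degenerate
   orientations become nonzero thanks to the quadratic term; and p(s) avoids the
   finitely many crossing points of old edges. *)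

From mathcomp Require Import all_boot all_order all_algebra.
From mathcomp Require Import boolp reals topology normedtype.
From mathcomp Require Import ring lra.
Import Order.TTheory GRing.Theory Num.Theory.
Import numFieldTopology.Exports numFieldNormedType.Exports.
Local Open Scope classical_set_scope.
Local Open Scope ring_scope.

Section NearZero.
Context {R : realFieldType}.

Lemma quadratic_cvg0 (c0 c1 c2 : R) : c0 + s * (c1 + s * c2) @[s --> 0^'+] --> c0.
Proof.
apply: cvg_at_right_filter.
rewrite -[X in _ --> X]addr0 -[X in _ --> _ + X](mul0r (c1 + 0 * c2)).
apply: cvgD; first exact: cvg_cst.
apply: cvgM; first exact: cvg_id.
by apply: cvgD; [exact: cvg_cst | apply: cvgMr_tmp; exact: cvg_id].
Qed.

Lemma near0_quadratic_gt0 (c0 c1 c2 : R) : 0 < c0 ->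
  \forall s \near 0^'+, 0 < c0 + s * (c1 + s * c2).
Proof. exact: (cvgr_gt _ (quadratic_cvg0 c0 c1 c2)). Qed.

Lemma near0_quadratic_sign (c0 c1 c2 : R) : c0 != 0 ->
  \forall s \near 0^'+, 0 < (c0 + s * (c1 + s * c2)) * c0.
Proof.
move=> c0n; have c0sq : 0 < c0 ^+ 2 by rewrite lt0r sqrf_eq0 c0n sqr_ge0.
have := near0_quadratic_gt0 _ (c1 * c0) (c2 * c0) c0sq.
by apply: filterS => s; congr (0 < _); ring.
Qed.

Lemma near0_quadratic_neq0 (c0 c1 c2 : R) : [|| c0 != 0, c1 != 0 | c2 != 0] ->
  \forall s \near 0^'+, c0 + s * (c1 + s * c2) != 0.
Proof.
have [-> /= c12|c0n _] := eqVneq c0 0; last exact: cvgr_neq0 _ (quadratic_cvg0 c0 c1 c2) c0n.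
have lin : \forall s \near 0^'+, c1 + s * c2 != 0.
  move: c12; have [-> /= c2n|c1n _] := eqVneq c1 0.
    by near=> s; rewrite !add0r mulf_neq0.
  by apply: filterS (cvgr_neq0 _ (quadratic_cvg0 c1 c2 0) c1n) => s; rewrite mulr0 addr0.
near=> s; rewrite add0r mulf_neq0 //; near: s; exact: lin.
Unshelve. all: by end_near.
Qed.
End NearZero.

Lemma ratio_itv01 {R : realFieldType} (a b : R) : a * b < 0 -> 0 < a / (a - b) < 1.
Proof.
move=> ab; have ab0 : a - b != 0 by apply/eqP => ab0; nra.
have : a / (a - b) * (a - b) = a by rewrite mulfVK.
set t := a / (a - b) => tE; apply/andP; split; nra.
Qed.

Lemma mul_lt0_same_sign {R : realFieldType} (a a' b b' : R) :
  0 < a * a' -> 0 < b * b' -> a * b <= 0 -> a' * b' < 0.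
Proof. by move=> aa bb ab; nra. Qed.

Section PlaneGeometry.
Context {R : realType}.
Local Notation pt := (R * R)%type.

Lemma on_open_seg_sym {z p q : pt} : on_open_seg z p q -> on_open_seg z q p.
Proof.
case=> t [/andP[t0 t1] ->]; exists (1 - t); split; first by apply/andP; split; lra.
by congr (_, _); rewrite /=; ring.
Qed.

Lemma orient_open_seg {z p q : pt} : on_open_seg z p q -> orient p q z = 0.
Proof. by case=> t [_ ->]; rewrite /orient /=; ring. Qed.

Lemma open_seg_neq_ends {z p q : pt} : on_open_seg z p q -> p <> q -> z <> p /\ z <> q.
Proof.
case: p q => [p1 p2] [q1 q2] [t [/andP[t0 t1] ->]] pq.
by split=> -[E1 E2]; apply: pq; congr (_, _); nra.
Qed.

Lemma open_segs_cross_orient_le0 {z a b p q : pt} :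
  on_open_seg z p q -> on_open_seg z a b -> orient a b p * orient a b q <= 0.
Proof.
case=> t [/andP[t0 t1] zE] /orient_open_seg.
have -> : orient a b z = (1 - t) * orient a b p + t * orient a b q.
  by rewrite zE /orient /=; ring.
move=> h; have hq := congr1 ( *%R^~ (orient a b q)) h; rewrite /= mul0r in hq.
nra.
Qed.

Lemma open_segs_cross_of_orient_lt0 {v u x y : pt} :
  orient x y v * orient x y u < 0 -> orient v u x * orient v u y < 0 ->
  exists z, on_open_seg z v u /\ on_open_seg z x y.
Proof.
move=> /[dup] /ratio_itv01 t01 h1 /[dup] /ratio_itv01 r01 h2.
have d1 : orient x y v - orient x y u != 0 by apply/eqP => h; nra.
have d2 : orient v u x - orient v u y != 0 by apply/eqP => h; nra.
set t := _ / _ in t01; set r := _ / _ in r01.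
exists (v.1 + t * (u.1 - v.1), v.2 + t * (u.2 - v.2)); split; first by exists t.
exists r; split=> //; rewrite /t /r; move: d1 d2; rewrite /orient => d1 d2.
by congr (_, _); field; rewrite ?d1 ?d2.
Qed.

Lemma orient_eq0_of_common_end {z a b c : pt} :
  on_open_seg z a b -> on_open_seg z c b -> orient a b c = 0.
Proof.
case=> t [/andP[t0 t1] zE] /on_open_seg_sym/orient_open_seg.
have -> : orient b c z = (1 - t) * orient a b c by rewrite zE /orient /=; ring.
by move/eqP; rewrite mulf_eq0 subr_eq0 => /orP[/eqP t1E|/eqP //]; lra.
Qed.

Lemma open_segs_cross_unique {a b c d z z' : pt} :
  orient c d a != 0 \/ orient c d b != 0 ->
  on_open_seg z a b -> on_open_seg z c d ->
  on_open_seg z' a b -> on_open_seg z' c d -> z = z'.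
Proof.
move=> abcd [t [_ zE]] /orient_open_seg z0 [t' [_ z'E]] /orient_open_seg z'0.
have za : orient c d z = orient c d a + t * (orient c d b - orient c d a).
  by rewrite zE /orient /=; ring.
have z'a : orient c d z' = orient c d a + t' * (orient c d b - orient c d a).
  by rewrite z'E /orient /=; ring.
have [tt'|] := eqVneq t t'; first by rewrite zE z'E tt'.
rewrite -subr_eq0 => tt'.
have : (t - t') * (orient c d b - orient c d a) == 0 by apply/eqP; lra.
rewrite mulf_eq0 (negbTE tt') /= => /eqP ba.
have oa0 : orient c d a = 0 by rewrite -z0 za ba mulr0 addr0.
by exfalso; case: abcd => /eqP; apply; lra.
Qed.

Lemma tieP {V : finType} {G : V -> pt} {v a b : V} {q : pt} :
  orient (G v) (G a) (G b) != 0 ->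
  tie G v a b q <-> 0 < orient (G v) q (G b) * orient (G v) (G a) q.
Proof.
rewrite /tie; move: (G v) (G a) (G b) => [c1 c2] [a1 a2] [b1 b2].
set k := orient _ _ _ => k0; split.
  case=> lam [al [be [lam0 [al0 [be0 ->]]]]].
  rewrite [X in 0 < X](_ : _ = (lam * k) ^+ 2 * (al * be)); last first.
    by rewrite /k /orient /=; ring.
  by apply: mulr_gt0; [rewrite exprn_even_gt0 //= mulf_neq0 | exact: mulr_gt0].
case: q => q1 q2; set X := orient _ _ (b1, b2); set Y := orient _ _ (q1, q2) => XY.
have X0 : X != 0 by apply: contraTneq XY => ->; rewrite mul0r ltxx.
exists (X / k), 1, (Y / X); split; first by rewrite mulf_neq0 ?invr_eq0.
split; first exact: ltr01.
split; first by rewrite [Y / X](_ : _ = X * Y / X ^+ 2) ?divr_gt0 ?exprn_even_gt0 //=; field.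
by move: k0 X0; rewrite /X /Y /k /orient /= => k0 X0; congr (_, _); field; rewrite k0 X0.
Qed.

Lemma tie_open_segs_disjoint {v a b p z : pt} :
  0 < orient v p b * orient v a p ->
  on_open_seg z p a -> on_open_seg z v b -> False.
Proof.
move=> + zpa zvb.
have := open_segs_cross_orient_le0 zpa zvb; have := open_segs_cross_orient_le0 zvb zpa.
have -> : orient p a v = - orient v a p by rewrite /orient; ring.
have -> : orient p a b = orient v a b - orient v p b - orient v a p by rewrite /orient; ring.
have -> : orient v b p = - orient v p b by rewrite /orient; ring.
have -> : orient v b a = - orient v a b by rewrite /orient; ring.
set X := orient v p b; set Y := orient v a p; set k := orient v a b.
move=> h2 h1 XY.
have X2 : 0 < X ^+ 2.
  by rewrite exprn_even_gt0 //=; apply: contraTneq XY => ->; rewrite mul0r ltxx.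
have Yk : Y * k <= 0 by nra.
nra.
Qed.

Lemma outside_tie_open_segs_cross {v a b p : pt} :
  0 < orient a b p * orient a b v -> orient v p b * orient v a p < 0 ->
  (exists z, on_open_seg z p a /\ on_open_seg z v b) \/
  (exists z, on_open_seg z p b /\ on_open_seg z v a).
Proof.
have -> : orient a b p = orient v a b - orient v p b - orient v a p by rewrite /orient; ring.
have -> : orient a b v = orient v a b by rewrite /orient; ring.
have Epav : orient p a v = - orient v a p by rewrite /orient; ring.
have Epab : orient p a b = orient v a b - orient v p b - orient v a p by rewrite /orient; ring.
have Evbp : orient v b p = - orient v p b by rewrite /orient; ring.
have Evba : orient v b a = - orient v a b by rewrite /orient; ring.
have Epbv : orient p b v = orient v p b by rewrite /orient; ring.
have Epba : orient p b a = orient v p b + orient v a p - orient v a b by rewrite /orient; ring.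
move=> side XY; have [Xk|Xk] := ltrP (orient v p b * orient v a b) 0.
  have h1 : orient p a v * orient p a b < 0 by rewrite Epav Epab; nra.
  have h2 : orient v b p * orient v b a < 0 by rewrite Evbp Evba; nra.
  by left; have [z [zvb zpa]] := open_segs_cross_of_orient_lt0 h1 h2; exists z.
have h1 : orient p b v * orient p b a < 0 by rewrite Epbv Epba; nra.
have h2 : orient v a p * orient v a b < 0 by nra.
by right; have [z [zva zpb]] := open_segs_cross_of_orient_lt0 h1 h2; exists z.
Qed.

Lemma orient_cycle (a b c : pt) : orient a b c = orient b c a.
Proof. by rewrite /orient; ring. Qed.

Definition quarter_turn (c q : pt) : pt := (c.1 - (q.2 - c.2), c.2 + (q.1 - c.1)).

(* The s^2 term takes the path off the line through c and q, so that an orientation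
   vanishing at c does not vanish identically along it. *)
Definition parabola (c q : pt) (s : R) : pt :=
  (c.1 + s * ((q.1 - c.1) - s * (q.2 - c.2)), c.2 + s * ((q.2 - c.2) + s * (q.1 - c.1))).

Lemma orient_parabola (c q A B : pt) (s : R) : orient (parabola c q s) A B =
  orient c A B + s * ((orient q A B - orient c A B) +
                      s * (orient (quarter_turn c q) A B - orient c A B)).
Proof. by rewrite /orient /=; ring. Qed.

Lemma parabola_coefs_neq0 {c q A B : pt} : q != c -> A != B ->
  (orient q A B - orient c A B != 0) ||
  (orient (quarter_turn c q) A B - orient c A B != 0).
Proof.
have sqrD_eq0 (x y : R) : (x ^+ 2 + y ^+ 2 == 0) = (x == 0) && (y == 0).
  by rewrite paddr_eq0 ?sqr_ge0 // !sqrf_eq0.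
case: c q A B => [c1 c2] [q1 q2] [a1 a2] [b1 b2].
rewrite !xpair_eqE -!negb_and -sqrD_eq0 -(subr_eq0 q1) -(subr_eq0 q2).
rewrite -(subr_eq0 a1) -(subr_eq0 a2) -!sqrD_eq0.
move=> qc AB; rewrite [X in X != 0](_ : _ =
  ((q1 - c1) ^+ 2 + (q2 - c2) ^+ 2) * ((a1 - b1) ^+ 2 + (a2 - b2) ^+ 2)).
  exact: mulf_neq0.
by rewrite /orient /=; ring.
Qed.

Lemma near_parabola_neq {c q : pt} (A : pt) : q != c ->
  \forall s \near 0^'+, parabola c q s != A.
Proof.
case: c q A => [c1 c2] [q1 q2] [a1 a2].
rewrite xpair_eqE negb_and -(subr_eq0 q1) -(subr_eq0 q2).
case/orP => qc.
  have := near0_quadratic_neq0 (c1 - a1) (q1 - c1) (- (q2 - c2)).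
  rewrite qc orbT => /(_ isT); apply: filterS => s.
  by apply: contra_neq => -[E1 _]; rewrite -E1; ring.
have := near0_quadratic_neq0 (c2 - a2) (q2 - c2) (q1 - c1).
rewrite qc orbT => /(_ isT); apply: filterS => s.
by apply: contra_neq => -[_ E2]; rewrite -E2; ring.
Qed.

Lemma near_parabola_orient_sign (q : pt) {c A B : pt} : orient c A B != 0 ->
  \forall s \near 0^'+, 0 < orient (parabola c q s) A B * orient c A B.
Proof.
move/(near0_quadratic_sign _ (orient q A B - orient c A B)
  (orient (quarter_turn c q) A B - orient c A B)).
by apply: filterS => s; rewrite orient_parabola.
Qed.

Lemma near_parabola_orient_neq0 {c q A B : pt} : q != c -> A != B ->
  \forall s \near 0^'+, orient (parabola c q s) A B != 0.
Proof.
move=> qc AB; have := near0_quadratic_neq0 (orient c A B) (orient q A B - orient c A B)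
  (orient (quarter_turn c q) A B - orient c A B).
rewrite (parabola_coefs_neq0 qc AB) orbT => /(_ isT).
by apply: filterS => s; rewrite orient_parabola.
Qed.

Lemma near_parabola_tie {c q A B : pt} : 0 < orient c q B * orient c A q ->
  \forall s \near 0^'+, 0 < orient c (parabola c q s) B * orient c A (parabola c q s).
Proof.
set r := quarter_turn c q; set X := orient c q B; set Y := orient c A q => XY.
have H := near0_quadratic_gt0 _ (X * orient c A r + orient c r B * Y)
  (orient c r B * orient c A r) XY.
near=> s.
have -> : orient c (parabola c q s) B * orient c A (parabola c q s) =
  s ^+ 2 * (X * Y + s * ((X * orient c A r + orient c r B * Y) +
                         s * (orient c r B * orient c A r))).
  by rewrite /X /Y /r /orient /parabola /quarter_turn /=; ring.
by rewrite mulr_gt0 ?exprn_gt0 //; near: s; exact: H.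
Unshelve. all: by end_near.
Qed.

End PlaneGeometry.

Section Clone.
Context {R : realType} {V : finType} {e : rel V} {l : nat}.
Context {G : V -> (R * R)%type} {chi : V -> V -> nat} {v : V}.
Hypotheses (e_sym : symmetric e) (e_irr : irreflexive e).
Hypotheses (drawing : layer_drawing e l G chi) (gpos : general_position e G).
Local Notation pt := (R * R)%type.

Lemma edge_neq {a b} : e a b -> a <> b.
Proof. by move=> + ab; rewrite ab e_irr. Qed.

Lemma orient_neq0 {a b c} : a <> b -> b <> c -> a <> c -> orient (G a) (G b) (G c) != 0.
Proof. exact: gpos.1. Qed.

Lemma distinct_edges_orient_neq0 {a b c d} : e a b -> e c d -> ~ same_edge a b c d ->
  orient (G c) (G d) (G a) != 0 \/ orient (G c) (G d) (G b) != 0.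
Proof.
move=> /edge_neq ab /edge_neq cd nse.
have [ac|ca] := eqVneq a c; last have [ad|da] := eqVneq a d.
- by right; apply: orient_neq0 => // [db|cb]; [apply: nse; left | apply: ab]; subst.
- by right; apply: orient_neq0 => // [db|cb]; [apply: ab | apply: nse; right]; subst.
- by left; apply: orient_neq0 => // /esym/eqP; apply/negP.
Qed.

Lemma open_seg_neq_vertex {a b z} u : e a b -> on_open_seg z (G a) (G b) -> z <> G u.
Proof.
move=> /edge_neq ab zab.
have [za zb] := open_seg_neq_ends zab (fun E => ab (drawing.1 _ _ E)).
have [<-|au] := eqVneq a u; first exact: za.
have [<-|bu] := eqVneq b u; first exact: zb.
move=> zu; have := orient_neq0 ab (elimN eqP bu) (elimN eqP au).
by rewrite -zu (orient_open_seg zab) eqxx.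
Qed.

Definition off_vertices (p : pt) := forall a, p <> G a.

Definition off_lines (p : pt) := forall a b, a <> b -> orient p (G a) (G b) != 0.

(* Old edges at u or v are left out: the sign argument of
   [near_misses_same_colour_edges] degenerates for them, and [off_lines] together with
   admissibility handles them instead (see [new_old_edges_disjoint]). *)
Definition misses_same_colour_edges (p : pt) :=
  forall u x y, e v u -> e x y -> chi v u = chi x y ->
  x <> u -> y <> u -> x <> v -> y <> v ->
  forall z, on_open_seg z p (G u) -> on_open_seg z (G x) (G y) -> False.

Definition misses_crossings (p : pt) :=
  forall u a b c d, e a b -> e c d -> ~ same_edge a b c d ->
  forall z, on_open_seg z (G a) (G b) -> on_open_seg z (G c) (G d) -> ~ on_open_seg z p (G u).

Definition new_edge (a b : option V) (u : V) :=
  (a = None /\ b = Some u) \/ (a = Some u /\ b = None).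

Variant clone_edge_spec (a b : option V) : Prop :=
  | OldEdge x y of a = Some x & b = Some y & e x y
  | NewEdge u of e v u & new_edge a b u.

Lemma clone_relP {a b : option V} : clone_rel e v a b -> clone_edge_spec a b.
Proof.
case: a b => [x|] [y|] //= exy; first exact: OldEdge.
- by apply: NewEdge exy _; right.
- by apply: NewEdge exy _; left.
Qed.

Lemma new_edge_open_seg {p : pt} {a b : option V} {u z} : new_edge a b u ->
  on_open_seg z (clone_draw G p a) (clone_draw G p b) -> on_open_seg z p (G u).
Proof. by case=> -[-> ->] //= /on_open_seg_sym. Qed.

Lemma new_edge_same {a b c d : option V} {u} :
  new_edge a b u -> new_edge c d u -> same_edge a b c d.
Proof. by case=> -[-> ->] [] [-> ->]; [left|right|right|left]. Qed.

Lemma new_edge_colour {a b : option V} {u} : new_edge a b u -> clone_col chi v a b = chi v u.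
Proof. by case=> -[-> ->]. Qed.

Lemma same_edge_Some {x y x' y' : V} :
  ~ same_edge (Some x) (Some y) (Some x') (Some y') -> ~ same_edge x y x' y'.
Proof. by move=> nse sxy; apply: nse; case: sxy => -[-> ->]; [left|right]. Qed.

Section CloneAt.
Variable p : pt.
Hypothesis p_off_lines : off_lines p.

Lemma new_edges_disjoint {a b c d : option V} {u u' z} : new_edge a b u -> new_edge c d u' ->
  ~ same_edge a b c d ->
  on_open_seg z (clone_draw G p a) (clone_draw G p b) ->
  on_open_seg z (clone_draw G p c) (clone_draw G p d) -> False.
Proof.
move=> nab ncd nse /(new_edge_open_seg nab)/on_open_seg_sym zpu.
move=> /(new_edge_open_seg ncd)/on_open_seg_sym zpu'.
have [uu'|uu'] := eqVneq u u'; first by subst; apply/nse/(new_edge_same nab).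
have := p_off_lines _ _ (nesym (elimN eqP uu')).
by rewrite -orient_cycle (orient_eq0_of_common_end zpu zpu') eqxx.
Qed.

Lemma new_old_edges_disjoint {u x y z} :
  admissible e G chi v p -> misses_same_colour_edges p ->
  e v u -> e x y -> chi v u = chi x y ->
  on_open_seg z p (G u) -> on_open_seg z (G x) (G y) -> False.
Proof.
move=> adm miss evu exy col zpu zxy.
have vu := edge_neq evu; have xy := edge_neq exy.
have [xu|/eqP xu] := eqVneq x u; first subst x.
  have := p_off_lines _ _ xy.
  by rewrite (orient_eq0_of_common_end zpu (on_open_seg_sym zxy)) eqxx.
have [yu|/eqP yu] := eqVneq y u; first subst y.
  have := p_off_lines _ _ (nesym xy).
  by rewrite (orient_eq0_of_common_end zpu zxy) eqxx.
have [xv|/eqP xv] := eqVneq x v; first subst x.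
  have k0 := orient_neq0 vu (nesym yu) xy.
  have := (tieP k0).1 (adm u y (nesym yu) evu exy col).
  by move/tie_open_segs_disjoint/(_ zpu zxy).
have [yv|/eqP yv] := eqVneq y v; first subst y.
  have k0 := orient_neq0 vu (nesym xu) (nesym xy).
  have col' : chi v u = chi v x by rewrite col drawing.2.2.1.
  have evx : e v x by rewrite e_sym.
  have := (tieP k0).1 (adm u x (nesym xu) evu evx col').
  by move/tie_open_segs_disjoint/(_ zpu (on_open_seg_sym zxy)).
exact: (miss u x y evu exy col xu yu xv yv z).
Qed.

Lemma clone_layer_drawing :
  off_vertices p -> admissible e G chi v p -> misses_same_colour_edges p ->
  layer_drawing (clone_rel e v) l (clone_draw G p) (clone_col chi v).
Proof.
move=> offv adm miss; case: drawing => G_inj [col_lt [col_sym noX]].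
split; [|split; [|split]].
- case=> [a|] [b|] //= => [/G_inj -> // | /esym/offv | /offv] [].
- by case=> [a|] [b|] //= /col_lt.
- by case=> [a|] [b|] //= /col_sym.
move=> a b c d /clone_relP[x y -> -> exy|u evu nab] /clone_relP[x' y' -> -> exy'|u' evu' ncd].
- move=> col [/same_edge_Some nse [z [zxy zxy']]].
  by apply: (noX x y x' y' exy exy' col); split=> //; exists z.
- rewrite (new_edge_colour ncd) => col [_ [z [zxy zcd]]].
  exact: (new_old_edges_disjoint adm miss evu' exy (esym col) (new_edge_open_seg ncd zcd) zxy).
- rewrite (new_edge_colour nab) => col [_ [z [zab zxy]]].
  exact: (new_old_edges_disjoint adm miss evu exy' col (new_edge_open_seg nab zab) zxy).
- by move=> _ [nse [z [zab zcd]]]; apply: (new_edges_disjoint nab ncd nse zab zcd).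
Qed.

Lemma clone_general_position :
  misses_crossings p -> general_position (clone_rel e v) (clone_draw G p).
Proof.
move=> missX; case: gpos => ncol noX3; split.
  case=> [a|] [b|] [c|] //= ab bc ac.
  - by apply: orient_neq0 => E; [apply: ab | apply: bc | apply: ac]; rewrite E.
  - by rewrite -orient_cycle; apply: p_off_lines => E; apply: ab; rewrite E.
  - by rewrite orient_cycle; apply: p_off_lines => E; apply: ac; rewrite E.
  - by apply: p_off_lines => E; apply: bc; rewrite E.
move=> a1 b1 a2 b2 a3 b3 z e1 e2 e3 n12 n13 n23 z1 z2 z3.
case: (clone_relP e1) n12 n13 z1 => [x1 y1 -> -> exy1|u1 _ new1] n12 n13 z1;
case: (clone_relP e2) n12 n23 z2 => [x2 y2 -> -> exy2|u2 _ new2] n12 n23 z2;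
case: (clone_relP e3) n13 n23 z3 => [x3 y3 -> -> exy3|u3 _ new3] n13 n23 z3.
- by apply: (noX3 x1 y1 x2 y2 x3 y3 z) => //; exact: same_edge_Some.
- exact: (missX u3 x1 y1 x2 y2 exy1 exy2 (same_edge_Some n12) z z1 z2
    (new_edge_open_seg new3 z3)).
- exact: (missX u2 x1 y1 x3 y3 exy1 exy3 (same_edge_Some n13) z z1 z3
    (new_edge_open_seg new2 z2)).
- exact: (new_edges_disjoint new2 new3 n23 z2 z3).
- exact: (missX u1 x2 y2 x3 y3 exy2 exy3 (same_edge_Some n23) z z2 z3
    (new_edge_open_seg new1 z1)).
- exact: (new_edges_disjoint new1 new3 n13 z1 z3).
- exact: (new_edges_disjoint new1 new2 n12 z1 z2).
- exact: (new_edges_disjoint new1 new2 n12 z1 z2).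
Qed.

End CloneAt.

Lemma clone_admissible {S : {set V}} {p} : vertex_cover e S -> v \notin S -> cell G S v p ->
  layer_drawing (clone_rel e v) l (clone_draw G p) (clone_col chi v) ->
  general_position (clone_rel e v) (clone_draw G p) -> admissible e G chi v p.
Proof.
move=> cover vS pcell [_ [_ [_ noX]]] [ncol _] a b ab eva evb col.
have va := edge_neq eva; have vb := edge_neq evb.
have inS u : e v u -> u \in S by case/cover => //; rewrite (negbTE vS).
have Sab : Some a <> Some b by case.
have Xn : orient (G v) p (G b) != 0 by apply: (ncol (Some v) None (Some b)) => // -[].
have Yn : orient (G v) (G a) p != 0 by apply: (ncol (Some v) (Some a) None) => // -[].
have Zn : orient (G a) (G b) p != 0 by apply: (ncol (Some a) (Some b) None).
have Kn : orient (G a) (G b) (G v) != 0 by apply: orient_neq0 => // /esym.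
have side : 0 < orient (G a) (G b) p * orient (G a) (G b) (G v).
  rewrite lt_def mulf_neq0 //= leNgt.
  by apply/negP/(pcell a b (inS a eva) (inS b evb) ab).
apply/(tieP (orient_neq0 va ab vb)); rewrite lt_def mulf_neq0 //= leNgt.
apply/negP => /(outside_tie_open_segs_cross side) [[z [zpa zvb]]|[z [zpb zva]]].
- apply: (noX None (Some a) (Some v) (Some b) eva evb col).
  by split; [case=> -[] | exists z].
- apply: (noX None (Some b) (Some v) (Some a) evb eva (esym col)).
  by split; [case=> -[] | exists z].
Qed.

(* A tie does not contain its centre, so [G v] is admissible only vacuously. *)
Lemma admissible_off_center :
  (exists q, admissible e G chi v q) -> exists2 q, q != G v & admissible e G chi v q.
Proof.
case=> q adm; have [qv|] := eqVneq q (G v); last by exists q.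
exists ((G v).1 + 1, (G v).2).
  by apply/eqP => /(congr1 fst)/=; lra.
move=> a b ab eva evb col; exfalso.
have := (tieP (orient_neq0 (edge_neq eva) ab (edge_neq evb))).1 (adm a b ab eva evb col).
have -> : orient (G v) q (G b) = 0 by rewrite qv /orient; ring.
by rewrite mul0r ltxx.
Qed.

Section NearParabola.
Variable q : pt.
Hypotheses (q_off_center : q != G v) (q_admissible : admissible e G chi v q).
Local Notation P := (parabola (G v) q).

Lemma near_off_vertices : \forall s \near 0^'+, off_vertices (P s).
Proof.
by apply: filter_forall => a; apply: filterS (near_parabola_neq (G a) q_off_center) => s /eqP.
Qed.

Lemma near_off_lines : \forall s \near 0^'+, off_lines (P s).
Proof.
apply: filter_forall => a; apply: filter_forall => b; apply: filter_imply => ab.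
by apply: near_parabola_orient_neq0 q_off_center _; apply/eqP => /drawing.1.
Qed.

Lemma near_cell (S : {set V}) : v \notin S -> \forall s \near 0^'+, cell G S v (P s).
Proof.
move=> vS; apply: filter_forall => a; apply: filter_forall => b.
apply: filter_imply => aS; apply: filter_imply => bS; apply: filter_imply => ab.
have va : v <> a by move=> va; rewrite va aS in vS.
have vb : v <> b by move=> vb; rewrite vb bS in vS.
apply: filterS (near_parabola_orient_sign q (orient_neq0 va ab vb)) => s.
rewrite /halfplane -(orient_cycle (P s)) -(orient_cycle (G v)).
by move=> /ltW; rewrite leNgt => /negP.
Qed.

Lemma near_admissible : \forall s \near 0^'+, admissible e G chi v (P s).
Proof.
apply: filter_forall => a; apply: filter_forall => b; apply: filter_imply => ab.
apply: filter_imply => eva; apply: filter_imply => evb; apply: filter_imply => col.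
have k0 := orient_neq0 (edge_neq eva) ab (edge_neq evb).
apply: filterS (near_parabola_tie ((tieP k0).1 (q_admissible a b ab eva evb col))) => s.
exact: (tieP k0).2.
Qed.

Lemma near_misses_same_colour_edges :
  \forall s \near 0^'+, misses_same_colour_edges (P s).
Proof.
apply: filter_forall => u; apply: filter_forall => x; apply: filter_forall => y.
apply: filter_imply => evu; apply: filter_imply => exy; apply: filter_imply => col.
apply: filter_imply => xu; apply: filter_imply => yu.
apply: filter_imply => xv; apply: filter_imply => yv.
have vu := edge_neq evu; have xy := edge_neq exy.
have xyu := orient_neq0 xy yu xu.
have sgn_xy := near_parabola_orient_sign q (orient_neq0 (nesym xv) xy (nesym yv)).
have sgn_ux := near_parabola_orient_sign q (orient_neq0 vu (nesym xu) (nesym xv)).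
have sgn_uy := near_parabola_orient_sign q (orient_neq0 vu (nesym yu) (nesym yv)).
near=> s => z zPu zxy.
have c1 := open_segs_cross_orient_le0 zPu zxy.
have c2 := open_segs_cross_orient_le0 zxy zPu.
rewrite -(orient_cycle (P s)) in c1.
have h1 : orient (G x) (G y) (G v) * orient (G x) (G y) (G u) < 0.
  rewrite -(orient_cycle (G v)); apply: mul_lt0_same_sign c1 => //.
  - by near: s.
  - by rewrite lt_def mulf_neq0 //= -expr2 sqr_ge0.
have h2 : orient (G v) (G u) (G x) * orient (G v) (G u) (G y) < 0.
  by apply: mul_lt0_same_sign c2; near: s.
have [z' [z'vu z'xy]] := open_segs_cross_of_orient_lt0 h1 h2.
apply: (drawing.2.2.2 v u x y evu exy col); split; last by exists z'.
by case=> -[xv' _]; [apply: xv | apply: yv].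
Unshelve. all: by end_near.
Qed.

Lemma near_misses_crossings : \forall s \near 0^'+, misses_crossings (P s).
Proof.
apply: filter_forall => u; apply: filter_forall => a; apply: filter_forall => b.
apply: filter_forall => c; apply: filter_forall => d.
apply: filter_imply => eab; apply: filter_imply => ecd; apply: filter_imply => nse.
have [[z0 [z0ab z0cd]]|nocross] := pselect (exists z0,
    on_open_seg z0 (G a) (G b) /\ on_open_seg z0 (G c) (G d)); last first.
  by near=> s => z zab zcd; case: nocross; exists z.
have nz0 : G u != z0 by apply/eqP; exact: nesym (open_seg_neq_vertex u eab z0ab).
apply: filterS (near_parabola_orient_neq0 q_off_center nz0) => s nPuz0 z zab zcd zPu.
have zE := open_segs_cross_unique (distinct_edges_orient_neq0 eab ecd nse) z0ab z0cd zab zcd.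
rewrite -zE in zPu.
by move: nPuz0; rewrite (orient_open_seg zPu) eqxx.
Unshelve. all: by end_near.
Qed.

End NearParabola.

Lemma admissible_clone {S : {set V}} : v \notin S -> (exists q, admissible e G chi v q) ->
  exists p, cell G S v p /\
    layer_drawing (clone_rel e v) l (clone_draw G p) (clone_col chi v) /\
    general_position (clone_rel e v) (clone_draw G p).
Proof.
move=> vS /admissible_off_center[q qv adm].
have [s [offv [offl [pcell [padm [miss missX]]]]]] : exists s,
    let p := parabola (G v) q s in off_vertices p /\ off_lines p /\ cell G S v p /\
      admissible e G chi v p /\ misses_same_colour_edges p /\ misses_crossings p.
  apply: (@filter_ex _ (0 : R)^'+ _); near=> s; do !split; near: s.
  - exact: near_off_vertices.
  - exact: near_off_lines.
  - exact: near_cell.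
  - exact: near_admissible.
  - exact: near_misses_same_colour_edges.
  - exact: near_misses_crossings.
exists (parabola (G v) q s); split=> //; split.
- exact: clone_layer_drawing.
- exact: clone_general_position.
Unshelve. all: by end_near.
Qed.

End Clone.

Theorem lemma1 (R : realType) (V : finType) (e : rel V) (l : nat)
    (G : V -> (R * R)%type) (chi : V -> V -> nat) (S : {set V}) (v : V) :
  symmetric e -> irreflexive e ->
  layer_drawing e l G chi -> general_position e G ->
  vertex_cover e S -> v \notin S ->
  ((exists p : R * R, cell G S v p /\
      layer_drawing (clone_rel e v) l (clone_draw G p) (clone_col chi v) /\
      general_position (clone_rel e v) (clone_draw G p))
   <-> (exists q : R * R, admissible e G chi v q)).
Proof.
move=> e_sym e_irr drawing gpos cover vS; split.
  case=> p [pcell [pdrawing pgpos]]; exists p.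
  exact: (clone_admissible e_irr gpos cover vS pcell pdrawing pgpos).
exact: (admissible_clone e_sym e_irr drawing gpos vS).
Qed.
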